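(* Let $T$ be an infinite, locally finite tree with maximum degree at least three and finite metric dimension. Then $$\beta(T)=\sum_{v\in V(T),\ \deg(v)\ge 3}\max\{P_T(v)-1,0\}.$$ Moreover, a set $S\subseteq V(T)$ is a metric basis of $T$ if and only if it is obtained as follows: for each vertex $v$ with $P_T(v)=k\ge 2$, choose $k-1$ vertices different from $v$ lying on $k-1$ distinct branch paths of $T$ at $v$ (and $S$ consists exactly of all the chosen vertices).
   Context: $d$ denotes shortest-path distance. A vertex $x$ resolves $u,v$ if $d(u,x)\ne d(v,x)$; a set of vertices is a resolving set if every pair of distinct vertices is resolved by some vertex of it. The metric dimension $\beta(T)$ is the minimum cardinality of a resolving set if a finite one exists, and $\infty$ otherwise; a metric basis is a resolving set of minimum cardinality. For a vertex $v$ of $T$, a branch of $T$ at $v$ is a maximal subtree of $T$ having $v$ as a leaf (so there are exactly $\deg(v)$ branches at $v$). A branch path of $T$ at $v$ is a branch at $v$ that is either a finite path or a one-way infinite path. $P_T(v)$ denotes the number of branch paths of $T$ at $v$. *)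

From Stdlib Require Import Arith List Lia ClassicalEpsilon.
Import ListNotations.

Section Graphs.
Context {V : Type} (adj : V -> V -> Prop).

Definition simple_graph : Prop :=
  (forall u v, adj u v -> adj v u) /\ (forall v, ~ adj v v).

Inductive walk : V -> V -> nat -> Prop :=
| walk_nil : forall u, walk u u 0
| walk_cons : forall u w v n, adj u w -> walk w v n -> walk u v (S n).

Inductive walk_in (B : V -> Prop) : V -> V -> Prop :=
| walk_in_nil : forall u, B u -> walk_in B u u
| walk_in_cons : forall u w v, B u -> adj u w -> walk_in B w v -> walk_in B u v.

Definition connected : Prop := forall u v, exists n, walk u v n.

Definition is_cycle (l : list V) : Prop :=
  exists x0, 3 <= length l /\ NoDup l /\
    (forall i, S i < length l -> adj (nth i l x0) (nth (S i) l x0)) /\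
    adj (nth (pred (length l)) l x0) (nth 0 l x0).

Definition is_tree : Prop := simple_graph /\ connected /\ ~ (exists l, is_cycle l).

Definition has_card {X : Type} (eqv : X -> X -> Prop) (A : X -> Prop) (n : nat) : Prop :=
  exists (l : list X) (d : X), length l = n /\
    (forall i, i < length l -> A (nth i l d)) /\
    (forall x, A x -> exists i, i < length l /\ eqv x (nth i l d)) /\
    (forall i j, i < length l -> j < length l -> i <> j ->
        ~ eqv (nth i l d) (nth j l d)).

Definition same_set (A B : V -> Prop) : Prop := forall x, A x <-> B x.

Definition infinite_vertices : Prop := ~ exists l : list V, forall x, In x l.

Definition locally_finite : Prop := forall v, exists n, has_card eq (adj v) n.

(* degree (meaningful in a locally finite graph) *)
Definition deg (v : V) : nat :=
  epsilon (inhabits 0) (fun n => has_card eq (adj v) n).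

Definition max_degree_ge3 : Prop := exists v, 3 <= deg v.

Definition dist (u v : V) (n : nat) : Prop :=
  walk u v n /\ forall m, walk u v m -> n <= m.

Definition resolves (x u v : V) : Prop :=
  exists a b, dist u x a /\ dist v x b /\ a <> b.

Definition resolving_set (S : V -> Prop) : Prop :=
  forall u v, u <> v -> exists x, S x /\ resolves x u v.

Definition metric_dim_is (n : nat) : Prop :=
  (exists S, resolving_set S /\ has_card eq S n) /\
  (forall S m, resolving_set S -> has_card eq S m -> n <= m).

Definition finite_metric_dim : Prop :=
  exists S m, resolving_set S /\ has_card eq S m.

Definition metric_basis (S : V -> Prop) : Prop :=
  resolving_set S /\ exists n, has_card eq S n /\ metric_dim_is n.

(* subtrees (connected vertex sets; induced subgraphs of a tree are forests) having
   v as a leaf, and branches = maximal such subtrees *)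
Definition subtree_with_leaf (v : V) (B : V -> Prop) : Prop :=
  B v /\ (forall x y, B x -> B y -> walk_in B x y) /\
  has_card eq (fun w => B w /\ adj v w) 1.

Definition branch (v : V) (B : V -> Prop) : Prop :=
  subtree_with_leaf v B /\
  forall B', (forall x, B x -> B' x) -> subtree_with_leaf v B' -> forall x, B' x -> B x.

Definition is_finite_path (B : V -> Prop) : Prop :=
  exists (l : list V) (d : V), NoDup l /\ l <> [] /\ (forall x, B x <-> In x l) /\
    (forall i j, i < length l -> j < length l ->
       (adj (nth i l d) (nth j l d) <-> (j = S i \/ i = S j))).

Definition is_ray (B : V -> Prop) : Prop :=
  exists f : nat -> V, (forall i j, f i = f j -> i = j) /\
    (forall x, B x <-> exists i, f i = x) /\
    (forall i j, adj (f i) (f j) <-> (j = S i \/ i = S j)).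

Definition branch_path (v : V) (B : V -> Prop) : Prop :=
  branch v B /\ (is_finite_path B \/ is_ray B).

Definition P (v : V) : nat :=
  epsilon (inhabits 0) (fun n => has_card same_set (branch_path v) n).

End Graphs.

Definition fsum_is {V : Type} (f : V -> nat) (n : nat) : Prop :=
  exists l : list V, NoDup l /\ (forall v, f v <> 0 -> In v l) /\
    n = fold_right (fun v acc => f v + acc) 0 l.

Definition obtained_by_selection {V : Type} (adj : V -> V -> Prop) (S : V -> Prop) : Prop :=
  exists sel : V -> list V,
    (forall v, 2 <= P adj v ->
       length (sel v) = P adj v - 1 /\
       exists (Bs : list (V -> Prop)) (dB : V -> Prop) (dx : V),
         length Bs = P adj v - 1 /\
         (forall i, i < length Bs ->
            branch_path adj v (nth i Bs dB) /\
            nth i (sel v) dx <> v /\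
            nth i Bs dB (nth i (sel v) dx)) /\
         (forall i j, i < length Bs -> j < length Bs -> i <> j ->
            ~ same_set (nth i Bs dB) (nth j Bs dB))) /\
    (forall v, P adj v < 2 -> sel v = []) /\
    (forall x, S x <-> exists v, In x (sel v)).

(* For a vertex v and a neighbour w of v, the "side" of w at v is the set of
   vertices reachable from w without passing through v; the branch of T at v
   through w is this side together with v, and every branch at v arises this
   way.  Call w a path-neighbour of v when that branch is a path (finite or
   a ray), so that P_T(v) is the number of path-neighbours of v.

   The proof rests on one characterisation: a set S resolves T iff, for every
   vertex v and any two distinct path-neighbours w1, w2 of v, S meets the side
   of w1 or the side of w2 at v ([resolving_iff_hits]).  Necessity is a
   distance computation.  Sufficiency uses finite metric dimension: branching
   vertices are at bounded distance, so every side at a vertex is either a path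
   or contains two path-sides of a farthest branching vertex; hence S meets at
   least one of any two sides at a vertex, and a minimal "equidistant centre"
   argument produces a resolving vertex.
   Sides of path-neighbours of distinct vertices with two or more branch paths
   are disjoint, so a hitting set has at least sum_v (P_T(v) - 1) elements, with
   equality exactly for the sets built by the selection procedure.  Finally a
   vertex with P_T(v) >= 2 has degree >= 3 (because T has a vertex of degree
   >= 3), which turns this sum into the one of the theorem. *)

From Stdlib Require Import Arith List Lia Classical ClassicalEpsilon.
Import ListNotations.

Definition holds (Q : Prop) : bool := if excluded_middle_informative Q then true else false.

Lemma holds_true (Q : Prop) : holds Q = true <-> Q.
Proof. unfold holds; destruct (excluded_middle_informative Q); split; congruence || tauto. Qed.

Lemma least_witness (Q : nat -> Prop) :
  (exists n, Q n) -> exists n, Q n /\ forall m, Q m -> n <= m.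
Proof.
  intros [N HN]. revert HN. induction N as [N IH] using lt_wf_ind. intros HN.
  destruct (classic (exists m, m < N /\ Q m)) as [[m [Hm Qm]] | Hno].
  - eapply IH; eauto.
  - exists N. split; auto. intros m Qm. destruct (le_lt_dec N m); auto. exfalso; eauto.
Qed.

Lemma pigeonhole n m (g : nat -> nat) :
  (forall i, i < n -> g i < m) ->
  (forall i j, i < n -> j < n -> g i = g j -> i = j) -> n <= m.
Proof.
  intros Hr Hi.
  assert (Hnd : NoDup (map g (seq 0 n))).
  { apply NoDup_map_NoDup_ForallPairs; [|apply seq_NoDup].
    intros a b Ha Hb E. apply in_seq in Ha; apply in_seq in Hb. apply Hi; lia. }
  apply NoDup_incl_length with (l' := seq 0 m) in Hnd.
  - rewrite length_map, !length_seq in Hnd; exact Hnd.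
  - intros x Hx. apply in_map_iff in Hx. destruct Hx as [i [<- Hi']].
    apply in_seq in Hi'. apply in_seq. specialize (Hr i). lia.
Qed.

Lemma has_card_le {X} (eqv : X -> X -> Prop) (A : X -> Prop) n m :
  (forall x y, eqv x y -> eqv y x) -> (forall x y z, eqv x y -> eqv y z -> eqv x z) ->
  has_card eqv A n -> has_card eqv A m -> n <= m.
Proof.
  intros Hs Ht [l1 [d1 [<- [A1 [_ D1]]]]] [l2 [d2 [<- [_ [C2 _]]]]].
  set (g := fun i => epsilon (inhabits 0)
              (fun j => j < length l2 /\ eqv (nth i l1 d1) (nth j l2 d2))).
  assert (Hg : forall i, i < length l1 ->
            g i < length l2 /\ eqv (nth i l1 d1) (nth (g i) l2 d2)).
  { intros i Hi. apply epsilon_spec, C2, A1, Hi. }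
  apply (pigeonhole _ _ g); [intros i Hi; apply Hg, Hi |].
  intros i j Hi Hj E. destruct (Nat.eq_dec i j) as [|Hne]; auto. exfalso.
  apply (D1 i j Hi Hj Hne). destruct (Hg i Hi) as [_ Ei]. destruct (Hg j Hj) as [_ Ej].
  rewrite E in Ei. eauto.
Qed.

Lemma has_card_list {X} (A : X -> Prop) n :
  has_card eq A n -> exists l, NoDup l /\ length l = n /\ forall x, A x <-> In x l.
Proof.
  intros [l [d [L [HA [HC HD]]]]]. exists l. split; [|split; [exact L|]].
  - apply (NoDup_nth l d). intros i j Hi Hj E.
    destruct (Nat.eq_dec i j) as [|Hne]; auto. exfalso. exact (HD i j Hi Hj Hne E).
  - intros x. split.
    + intros Hx. destruct (HC x Hx) as [i [Hi ->]]. apply nth_In; auto.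
    + intros Hx. destruct (In_nth l x d Hx) as [i [Hi <-]]. apply HA; auto.
Qed.

Lemma list_has_card {X} (d : X) (A : X -> Prop) l :
  NoDup l -> (forall x, A x <-> In x l) -> has_card eq A (length l).
Proof.
  intros N H. exists l, d. split; auto. split; [intros i Hi; apply H, nth_In; auto |]. split.
  - intros x Hx. apply H in Hx. destruct (In_nth l x d Hx) as [i [Hi E]]. exists i; auto.
  - intros i j Hi Hj Hne E. apply Hne. eapply NoDup_nth; eauto.
Qed.

Lemma same_set_sym {V} (A B : V -> Prop) : same_set A B -> same_set B A.
Proof. intros H x; split; apply H. Qed.

Lemma same_set_trans {V} (A B C : V -> Prop) : same_set A B -> same_set B C -> same_set A C.
Proof. intros H1 H2 x; split; intros; [apply H2, H1 | apply H1, H2]; auto. Qed.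

Definition sumf {X} (g : X -> nat) (l : list X) : nat :=
  fold_right (fun v acc => g v + acc) 0 l.

Lemma sumf_le {X} (g h : X -> nat) l :
  (forall v, In v l -> g v <= h v) -> sumf g l <= sumf h l.
Proof.
  induction l as [|a l IH]; simpl; intros H; [lia|].
  pose proof (H a (or_introl eq_refl)). specialize (IH (fun v Hv => H v (or_intror Hv))). lia.
Qed.

Lemma sumf_le_eq {X} (g h : X -> nat) l :
  (forall v, In v l -> g v <= h v) -> sumf h l <= sumf g l -> forall v, In v l -> g v = h v.
Proof.
  induction l as [|a l IH]; simpl; intros H E v Hv; [destruct Hv|].
  pose proof (H a (or_introl eq_refl)).
  pose proof (sumf_le g h l (fun v Hv => H v (or_intror Hv))).
  destruct Hv as [<- | Hv]; [lia|]. apply IH; auto. lia.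
Qed.

Lemma sumf_ext {X} (g h : X -> nat) l : (forall v, In v l -> g v = h v) -> sumf g l = sumf h l.
Proof. induction l; simpl; intros H; auto; rewrite (H a (or_introl eq_refl)), IHl; auto. Qed.

Lemma length_concat_map {X Y} (F : X -> list Y) l :
  length (concat (map F l)) = sumf (fun v => length (F v)) l.
Proof. induction l; simpl; auto. rewrite length_app, IHl; auto. Qed.

Lemma in_concat_map {X Y} (F : X -> list Y) l y :
  In y (concat (map F l)) <-> exists v, In v l /\ In y (F v).
Proof.
  rewrite in_concat. split.
  - intros [L [HL Hy]]. apply in_map_iff in HL. destruct HL as [v [<- Hv]]. eauto.
  - intros [v [Hv Hy]]. exists (F v). split; auto. apply in_map; auto.
Qed.

Lemma NoDup_concat_map {X Y} (F : X -> list Y) l :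
  NoDup l -> (forall v, In v l -> NoDup (F v)) ->
  (forall v v' y, In v l -> In v' l -> v <> v' -> In y (F v) -> In y (F v') -> False) ->
  NoDup (concat (map F l)).
Proof.
  induction l as [|a l IH]; simpl; intros N H D; [constructor|].
  inversion N; subst. apply NoDup_app; [apply H; auto | apply IH; auto |].
  - intros v v' y Hv Hv'; apply D; auto.
  - intros y Hy Hy'. apply in_concat_map in Hy'. destruct Hy' as [v [Hv Hyv]].
    apply (D a v y); auto. intros E; subst; auto.
Qed.

Lemma filter_length_ge {X} (Q : X -> Prop) (L : list X) : NoDup L ->
  (forall w1 w2, In w1 L -> In w2 L -> w1 <> w2 -> Q w1 \/ Q w2) ->
  length L - 1 <= length (filter (fun w => holds (Q w)) L).
Proof.
  induction L as [|a t IH]; simpl; intros N H; [lia|].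
  inversion N; subst. destruct (holds (Q a)) eqn:E.
  - simpl. enough (length t - 1 <= length (filter (fun w => holds (Q w)) t)) by lia.
    apply IH; auto; intros w1 w2 H1 H2; apply H; simpl; auto.
  - assert (Hall : forall w, In w t -> Q w).
    { intros w Hw. destruct (H a w (or_introl eq_refl) (or_intror Hw)) as [Hq|Hq]; auto.
      - intros E'; subst; auto.
      - apply holds_true in Hq. congruence. }
    rewrite forallb_filter_id; [lia|]. apply forallb_forall.
    intros w Hw. apply holds_true, Hall, Hw.
Qed.

Lemma firstn_NoDup_incl {X} (l : list X) n : NoDup l -> NoDup (firstn n l) /\ incl (firstn n l) l.
Proof.
  intros N. pose proof (firstn_skipn n l) as E. split.
  - rewrite <- E in N. eapply NoDup_app_remove_r; eauto.
  - intros x Hx. rewrite <- E. apply in_or_app; auto.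
Qed.

Section Tree.
Context {V : Type} (adj : V -> V -> Prop) (Htree : is_tree adj).

Lemma adj_sym u v : adj u v -> adj v u. Proof. apply Htree. Qed.
Lemma adj_irrefl v : ~ adj v v. Proof. apply Htree. Qed.

Lemma walk_app u w v a b : walk adj u w a -> walk adj w v b -> walk adj u v (a + b).
Proof. induction 1; intros; simpl; auto. econstructor; eauto. Qed.

Lemma walk_rev u v n : walk adj u v n -> walk adj v u n.
Proof.
  induction 1; [constructor|].
  replace (S n) with (n + 1) by lia. eapply walk_app; eauto.
  econstructor; [apply adj_sym; eauto | constructor].
Qed.

Lemma walk_in_app B u w v : walk_in adj B u w -> walk_in adj B w v -> walk_in adj B u v.
Proof. induction 1; intros; auto. econstructor; eauto. Qed.

Lemma walk_in_first B u v : walk_in adj B u v -> B u.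
Proof. destruct 1; auto. Qed.

Lemma walk_in_last B u v : walk_in adj B u v -> B v.
Proof. induction 1; auto. Qed.

Lemma walk_in_rev B u v : walk_in adj B u v -> walk_in adj B v u.
Proof.
  induction 1; [constructor; auto|].
  eapply walk_in_app; eauto.
  econstructor; [eapply walk_in_first; eauto | apply adj_sym; eauto | constructor; auto].
Qed.

Lemma walk_in_mono (B B' : V -> Prop) u v :
  walk_in adj B u v -> (forall x, B x -> B' x) -> walk_in adj B' u v.
Proof. induction 1; intros; econstructor; eauto. Qed.

Lemma walk_avoid_or_through v u x n : walk adj u x n ->
  walk_in adj (fun z => z <> v) u x \/
  exists a b, walk adj u v a /\ walk adj v x b /\ a + b = n.
Proof.
  induction 1 as [u | u w x n Huw Hw IH].
  - destruct (classic (u = v)) as [->|Hne].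
    + right. exists 0, 0. repeat split; constructor.
    + left. constructor; auto.
  - destruct (classic (u = v)) as [->|Hne].
    + right. exists 0, (S n). repeat split; [constructor | econstructor; eauto].
    + destruct IH as [Hl | [a [b [Ha [Hb E]]]]].
      * left. econstructor; eauto.
      * right. exists (S a), b. repeat split; auto; [econstructor; eauto | lia].
Qed.

Inductive vpath : V -> V -> list V -> Prop :=
| vpath_one : forall a, vpath a a [a]
| vpath_cons : forall a b c l, adj a b -> vpath b c l -> vpath a c (a :: l).

Lemma walk_in_vpath B a c : walk_in adj B a c ->
  exists l, vpath a c l /\ forall z, In z l -> B z.
Proof.
  induction 1 as [u Hu | u w v Hu Huw _ [l [Hl Hz]]].
  - exists [u]; split; [constructor | intros z [<-|[]]; auto].
  - exists (u :: l). split; [econstructor; eauto | intros z [<-|Hz']; auto].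
Qed.

Lemma vpath_suffix b c l x : vpath b c l -> In x l -> exists l1 l2, vpath x c l2 /\ l = l1 ++ l2.
Proof.
  induction 1 as [a | a b c l Hab Hl IH]; intros Hx.
  - destruct Hx as [E|[]]. subst. exists [], [x]. split; auto. constructor.
  - destruct Hx as [E|Hx].
    + subst. exists [], (x :: l). split; auto. econstructor; eauto.
    + destruct (IH Hx) as [l1 [l2 [H1 H2]]]. exists (a :: l1), l2. subst. auto.
Qed.

Lemma vpath_simple a c l : vpath a c l -> exists l', vpath a c l' /\ NoDup l' /\ incl l' l.
Proof.
  induction 1 as [a | a b c l Hab Hl [l0 [Hp0 [N0 I0]]]].
  - exists [a]. split; [constructor|]. split; [repeat constructor; auto | apply incl_refl].
  - destruct (classic (In a l0)) as [Hin|Hn].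
    + destruct (vpath_suffix _ _ _ _ Hp0 Hin) as [l1 [l2 [H2 E]]]. exists l2. split; auto.
      subst. split; [eapply NoDup_app_remove_l; eauto |].
      intros z Hz. right. apply I0. apply in_or_app; auto.
    + exists (a :: l0). split; [econstructor; eauto|]. split; [constructor; auto|].
      intros z [<-|Hz]; [left | right]; auto.
Qed.

Lemma vpath_head a c l d : vpath a c l -> nth 0 l d = a.
Proof. destruct 1; auto. Qed.

Lemma vpath_length a c l : vpath a c l -> 1 <= length l.
Proof. destruct 1; simpl; lia. Qed.

Lemma vpath_last a c l d : vpath a c l -> nth (length l - 1) l d = c.
Proof.
  induction 1 as [a | a b c l Hab Hl IH]; auto.
  pose proof (vpath_length _ _ _ Hl). destruct l as [|x l]; [simpl in *; lia|].
  change (nth (length (x :: l) - 0) (a :: x :: l) d = c).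
  rewrite Nat.sub_0_r. simpl in IH |- *. rewrite Nat.sub_0_r in IH. exact IH.
Qed.

Lemma vpath_adj a c l d : vpath a c l -> forall i, S i < length l -> adj (nth i l d) (nth (S i) l d).
Proof.
  induction 1 as [a | a b c l Hab Hl IH]; intros i Hi; [simpl in Hi; lia|].
  destruct i as [|i]; simpl.
  - erewrite vpath_head; eauto.
  - apply IH. simpl in Hi; lia.
Qed.

Lemma neighbours_separated v w1 w2 : adj v w1 -> adj v w2 -> w1 <> w2 ->
  ~ walk_in adj (fun z => z <> v) w1 w2.
Proof.
  intros H1 H2 Hne Hw.
  destruct (walk_in_vpath _ _ _ Hw) as [l0 [Hl0 Hz0]].
  destruct (vpath_simple _ _ _ Hl0) as [l [Hl [Nl Il]]].
  destruct Htree as [_ [_ Hnc]]. apply Hnc. exists (v :: l), v.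
  assert (Hlen : 2 <= length l).
  { destruct l as [|x [|y l']]; [inversion Hl | | simpl; lia].
    inversion Hl as [| ? ? ? ? _ Hnil]; subst; [congruence | inversion Hnil]. }
  split; [simpl; lia|]. split.
  { constructor; auto. intros Hin. apply (Hz0 v); auto. }
  split.
  - intros i Hi. destruct i as [|i]; simpl.
    + rewrite (vpath_head _ _ _ v Hl); auto.
    + apply (vpath_adj _ _ _ v Hl). simpl in Hi; lia.
  - pose proof (vpath_last _ _ _ v Hl) as HL.
    destruct l as [|x l']; [simpl in Hlen; lia|].
    simpl in HL |- *. rewrite Nat.sub_0_r in HL.
    destruct l' as [|y l'']; [simpl in Hlen; lia|].
    rewrite HL. apply adj_sym; auto.
Qed.

Hypothesis Hconn : connected adj.

Definition dst (u v : V) : nat := epsilon (inhabits 0) (dist adj u v).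

Lemma dst_spec u v : dist adj u v (dst u v).
Proof.
  unfold dst. apply epsilon_spec.
  destruct (least_witness (walk adj u v) (Hconn u v)) as [n [H1 H2]]. exists n; split; auto.
Qed.

Lemma dst_le_walk u v n : walk adj u v n -> dst u v <= n.
Proof. intros; apply (dst_spec u v); auto. Qed.

Lemma dst_walk u v : walk adj u v (dst u v).
Proof. apply dst_spec. Qed.

Lemma dist_dst u v n : dist adj u v n -> n = dst u v.
Proof.
  intros [H1 H2]. pose proof (dst_le_walk _ _ _ H1). pose proof (H2 _ (dst_walk u v)). lia.
Qed.

Lemma dst_sym u v : dst u v = dst v u.
Proof.
  pose proof (dst_le_walk _ _ _ (walk_rev _ _ _ (dst_walk u v))).
  pose proof (dst_le_walk _ _ _ (walk_rev _ _ _ (dst_walk v u))). lia.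
Qed.

Lemma dst_triangle u v w : dst u w <= dst u v + dst v w.
Proof. apply dst_le_walk. apply walk_app with (w := v); apply dst_walk. Qed.

Lemma dst_eq0 u v : dst u v = 0 -> u = v.
Proof. intros H. pose proof (dst_walk u v) as W. rewrite H in W. inversion W; auto. Qed.

Lemma dst_refl u : dst u u = 0.
Proof. pose proof (dst_le_walk _ _ _ (walk_nil adj u)). lia. Qed.

Lemma dst_adj u v : adj u v -> dst u v = 1.
Proof.
  intros H. assert (dst u v <= 1) by (apply dst_le_walk; econstructor; eauto; constructor).
  destruct (dst u v) eqn:E; [|lia]. apply dst_eq0 in E. subst. exfalso; eapply adj_irrefl; eauto.
Qed.

Lemma dst1_adj y x : dst y x = 1 -> adj y x.
Proof.
  intros E. pose proof (dst_walk y x) as W. rewrite E in W.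
  inversion W as [|? w ? ? Ha Hw]; subst. inversion Hw; subst. auto.
Qed.

Lemma resolves_iff x u v : resolves adj x u v <-> dst u x <> dst v x.
Proof.
  split.
  - intros [a [b [Ha [Hb Hne]]]]. apply dist_dst in Ha. apply dist_dst in Hb. congruence.
  - intros Hne. exists (dst u x), (dst v x). split; [apply dst_spec | split; [apply dst_spec | auto]].
Qed.

Definition side (v w x : V) : Prop := adj v w /\ walk_in adj (fun z => z <> v) w x.

Lemma side_ne v w x : side v w x -> x <> v.
Proof. intros [_ H]. apply walk_in_last in H. auto. Qed.

Lemma side_self v w : adj v w -> side v w w.
Proof. intros H. split; auto. constructor. intros E; subst; eapply adj_irrefl; eauto. Qed.

Lemma side_exists v x : x <> v -> exists w, side v w x /\ dst v x = S (dst w x).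
Proof.
  intros Hx. pose proof (dst_walk v x) as Hw. remember (dst v x) as n.
  inversion Hw as [|? w ? m Hvw Hwx]; subst; [congruence|].
  exists w. destruct (walk_avoid_or_through v _ _ _ Hwx) as [Hl | [a [b [Ha [Hb E]]]]].
  - split; [split; auto|]. pose proof (dst_le_walk _ _ _ Hwx).
    assert (dst v x <= S (dst w x)) by (apply dst_le_walk; econstructor; eauto; apply dst_walk).
    lia.
  - exfalso. pose proof (dst_le_walk _ _ _ Hb). lia.
Qed.

Lemma side_unique v w1 w2 x : side v w1 x -> side v w2 x -> w1 = w2.
Proof.
  intros [H1 W1] [H2 W2]. destruct (classic (w1 = w2)) as [|Hne]; auto. exfalso.
  apply (neighbours_separated v w1 w2); auto. eapply walk_in_app; eauto. apply walk_in_rev; auto.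
Qed.

Lemma side_step v w x z : side v w x -> adj x z -> z <> v -> side v w z.
Proof.
  intros [H1 W] Ha Hz. split; auto. apply walk_in_app with (w := x); auto.
  econstructor; [exact (walk_in_last _ _ _ W) | eauto | constructor; auto].
Qed.

Lemma side_dst v w x : side v w x -> dst v x = S (dst w x).
Proof.
  intros Hc. destruct (side_exists v x (side_ne _ _ _ Hc)) as [w' [Hc' E]].
  rewrite (side_unique _ _ _ _ Hc Hc'). auto.
Qed.

Lemma side_split v w x y : side v w x -> ~ side v w y -> dst y x = dst y v + dst v x.
Proof.
  intros Hc Hn. pose proof (dst_triangle y v x).
  destruct (walk_avoid_or_through v _ _ _ (dst_walk y x)) as [Hl | [a [b [Ha [Hb E]]]]].
  - exfalso. apply Hn. destruct Hc as [H1 W]. split; auto.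
    eapply walk_in_app; eauto. apply walk_in_rev; auto.
  - pose proof (dst_le_walk _ _ _ Ha). pose proof (dst_le_walk _ _ _ Hb). lia.
Qed.

Lemma neighbour_dst_cases x y z : x <> y -> adj x z ->
  (side x z y /\ dst y x = S (dst y z)) \/ (~ side x z y /\ dst y z = S (dst y x)).
Proof.
  intros Hxy Ha. destruct (classic (side x z y)) as [Hc|Hn].
  - left. split; auto. rewrite (dst_sym y x), (dst_sym y z). apply side_dst; auto.
  - right. split; auto. rewrite (side_split x z z y (side_self _ _ Ha) Hn), (dst_adj _ _ Ha). lia.
Qed.

Lemma adj_dst y a b : adj a b -> dst y b = S (dst y a) \/ dst y a = S (dst y b).
Proof.
  intros H. destruct (classic (a = y)) as [<-|Hne].
  - left. rewrite dst_refl, (dst_sym a b), (dst_adj _ _ (adj_sym _ _ H)). auto.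
  - destruct (neighbour_dst_cases a y b) as [[_ E]|[_ E]]; auto.
Qed.

Lemma side_walk_in v w u x : walk_in adj (fun z => z <> v) u x -> side v w u ->
  walk_in adj (side v w) u x.
Proof.
  induction 1 as [u Hu | u t x Hu Hut Ht IH]; intros Hc; [constructor; auto|].
  econstructor; eauto. apply IH. eapply side_step; eauto. exact (walk_in_first _ _ _ Ht).
Qed.

Lemma side_nest c a y p z : side c a y -> side y p z -> ~ side y p c -> side c a z.
Proof.
  intros Hca Hyp Hn.
  assert (Hw : walk_in adj (fun t => t <> c) p z).
  { destruct Hyp as [Hyp1 W]. eapply walk_in_mono; [apply side_walk_in; eauto; apply side_self; auto|].
    intros t Ht E; subst; auto. }
  destruct Hca as [Ha W]. split; auto. apply walk_in_app with (w := y); auto.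
  econstructor; [exact (walk_in_last _ _ _ W) | destruct Hyp; eauto | auto].
Qed.

Definition br (v w x : V) : Prop := x = v \/ side v w x.

Definition pathlike (B : V -> Prop) : Prop := is_finite_path adj B \/ is_ray adj B.

Definition path_nb (v w : V) : Prop := adj v w /\ pathlike (br v w).

Lemma has_card1_eq (A : V -> Prop) a b : has_card eq A 1 -> A a -> A b -> a = b.
Proof.
  intros [l [d [Hl [_ [Hc _]]]]] Ha Hb.
  destruct (Hc a Ha) as [i [Hi ->]]. destruct (Hc b Hb) as [j [Hj ->]].
  replace i with 0 by lia. replace j with 0 by lia. auto.
Qed.

Lemma walk_in_last_step (B : V -> Prop) x v : walk_in adj B x v -> x <> v ->
  exists z, adj z v /\ B z /\ walk_in adj (fun t => B t /\ t <> v) x z.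
Proof.
  induction 1 as [u Hu | u w v Hu Huw Hw IH]; intros Hne; [congruence|].
  destruct (classic (w = v)) as [->|Hwv].
  - exists u. split; auto. split; auto. constructor; auto.
  - destruct (IH Hwv) as [z [Hz1 [Hz2 Hz3]]]. exists z. split; auto. split; auto.
    econstructor; eauto.
Qed.

Lemma br_walk_in v w x : adj v w -> br v w x -> walk_in adj (br v w) v x.
Proof.
  intros Ha [->|Hc]; [constructor; left; auto|].
  econstructor; [left; auto | exact Ha |].
  destruct Hc as [_ W]. eapply walk_in_mono; [apply side_walk_in; eauto; apply side_self; auto|].
  intros t Ht; right; auto.
Qed.

Lemma br_subtree v w : adj v w -> subtree_with_leaf adj v (br v w).
Proof.
  intros Ha. split; [left; auto|]. split.
  - intros x y Hx Hy. apply walk_in_app with (w := v); [apply walk_in_rev|]; apply br_walk_in; auto.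
  - exists [w], w. split; auto. split; [|split].
    + intros i Hi. simpl in Hi. replace i with 0 by lia. simpl.
      split; auto. right. apply side_self; auto.
    + intros x [[->|Hc] Hx]; [exfalso; eapply adj_irrefl; eauto|].
      exists 0. split; [simpl; lia|]. simpl. eapply side_unique; eauto. apply side_self; auto.
    + intros i j Hi Hj. simpl in *. lia.
Qed.

Lemma subtree_in_br v B : subtree_with_leaf adj v B ->
  exists w, adj v w /\ B w /\ forall x, B x -> br v w x.
Proof.
  intros [Hv [Hcn Hc]].
  destruct Hc as [l [d [Hl [Hin [Hcov Hd]]]]].
  destruct (Hin 0 ltac:(lia)) as [Hw1 Hw2].
  set (w := nth 0 l d) in *.
  assert (Hc1 : has_card eq (fun z => B z /\ adj v z) 1) by (exists l, d; auto).
  exists w. split; auto. split; auto.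
  intros x Hx. destruct (classic (x = v)) as [|Hxv]; [left; auto|]. right.
  destruct (walk_in_last_step B x v (Hcn x v Hx Hv) Hxv) as [z [Hz1 [Hz2 Hz3]]].
  assert (z = w) as ->.
  { apply (has_card1_eq _ _ _ Hc1); split; auto. apply adj_sym; auto. }
  split; auto. apply walk_in_rev. eapply walk_in_mono; eauto. intros t [_ ?]; auto.
Qed.

Lemma br_branch v w : adj v w -> branch adj v (br v w).
Proof.
  intros Ha. split; [apply br_subtree; auto|].
  intros B' Hsub Hswl x Hx.
  destruct (subtree_in_br v B' Hswl) as [w' [Ha' [Hw' Hall]]].
  apply Hall in Hx.
  assert (w' = w) as <-; auto.
  destruct Hswl as [_ [_ Hc1]]. apply (has_card1_eq _ _ _ Hc1); split; auto.
  apply Hsub. right; apply side_self; auto.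
Qed.

Lemma branch_br v B : branch adj v B -> exists w, adj v w /\ same_set B (br v w).
Proof.
  intros [Hswl Hmax]. destruct (subtree_in_br v B Hswl) as [w [Ha [Hw Hall]]].
  exists w. split; auto. intros x. split; auto.
  apply Hmax; auto. apply br_subtree; auto.
Qed.

Lemma br_inj v w1 w2 : adj v w1 -> adj v w2 -> same_set (br v w1) (br v w2) -> w1 = w2.
Proof.
  intros H1 H2 Hs. destruct (proj1 (Hs w1) (or_intror (side_self _ _ H1))) as [E|Hc].
  - subst. exfalso; eapply adj_irrefl; eauto.
  - symmetry. eapply side_unique; eauto. apply side_self; auto.
Qed.

Lemma pathlike_same B B' : same_set B B' -> pathlike B -> pathlike B'.
Proof.
  intros Hs [[l [d [H1 [H2 [H3 H4]]]]] | [f [H1 [H2 H3]]]].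
  - left. exists l, d. do 3 (split; auto).
    intros x. split; intros Hx; [apply H3, Hs | apply Hs, H3]; auto.
  - right. exists f. split; auto. split; auto.
    intros x. split; intros Hx; [apply H2, Hs | apply Hs, H2]; auto.
Qed.

Lemma branch_path_nb v B : branch_path adj v B -> exists w, path_nb v w /\ same_set B (br v w).
Proof.
  intros [Hb Hp]. destruct (branch_br v B Hb) as [w [Ha Hs]].
  exists w. split; auto. split; auto. eapply pathlike_same; eauto.
Qed.

Lemma path_nb_branch_path v w : path_nb v w -> branch_path adj v (br v w).
Proof. intros [Ha Hp]. split; auto. apply br_branch; auto. Qed.

Definition branching (z : V) : Prop :=
  exists a b c, adj z a /\ adj z b /\ adj z c /\ a <> b /\ a <> c /\ b <> c.

(* If the side of p at y contains no branching vertex, the branch [br y p] is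
   a path: walking away from y without turning back enumerates it, and it is a
   ray or a finite path according as the walk goes on forever or stops. *)
Section SideWithoutBranching.
Variables (y p : V).
Hypothesis Hyp : adj y p.
Hypothesis Hnobranch : forall z, side y p z -> ~ branching z.

(* Some neighbour of b other than a, if there is one. *)
Definition next_vertex (a b : V) : V := epsilon (inhabits b) (fun z => adj b z /\ z <> a).

(* The walk y, p, ... that never immediately turns back, as consecutive pairs. *)
Fixpoint walker_pair (n : nat) : V * V :=
  match n with
  | 0 => (y, p)
  | S n => (snd (walker_pair n), next_vertex (fst (walker_pair n)) (snd (walker_pair n)))
  end.
Definition walker (n : nat) : V := fst (walker_pair n).

Lemma walker_0 : walker 0 = y. Proof. reflexivity. Qed.
Lemma walker_1 : walker 1 = p. Proof. reflexivity. Qed.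
Lemma walker_SS n : walker (S (S n)) = next_vertex (walker n) (walker (S n)).
Proof. reflexivity. Qed.

Definition extends (k : nat) : Prop := exists z, adj (walker (S k)) z /\ z <> walker k.

Lemma extends_spec k : extends k ->
  adj (walker (S k)) (walker (S (S k))) /\ walker (S (S k)) <> walker k.
Proof.
  intros H. rewrite walker_SS. unfold next_vertex.
  exact (epsilon_spec (inhabits (walker (S k))) (fun z => adj (walker (S k)) z /\ z <> walker k) H).
Qed.

Lemma walker_geodesic n : (forall k, k < n -> extends k) ->
  adj (walker n) (walker (S n)) /\ dst y (walker n) = n /\
  dst y (walker (S n)) = S n /\ side y p (walker (S n)).
Proof.
  induction n as [|n IH]; intros Hal.
  - rewrite walker_0, walker_1, dst_refl, dst_adj; auto. repeat split; auto. apply side_self; auto.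
  - destruct IH as [A1 [A2 [A3 A4]]]; [intros k Hk; apply Hal; lia|].
    destruct (extends_spec n (Hal n ltac:(lia))) as [B1 B2].
    set (x := walker (S n)) in *. set (z := walker (S (S n))) in *.
    assert (Hxy : x <> y) by (intros E; rewrite E, dst_refl in A3; lia).
    split; auto. split; auto.
    destruct (neighbour_dst_cases x y z Hxy B1) as [[C1 C2]|[C1 C2]].
    + exfalso. destruct (neighbour_dst_cases x y (walker n) Hxy (adj_sym _ _ A1)) as [[D1 D2]|[D1 D2]].
      * apply B2. eapply side_unique; eauto.
      * lia.
    + split; [lia|]. eapply side_step; eauto. intros E. rewrite E, dst_refl in C2. lia.
Qed.

Lemma walker_covers m x : side y p x -> dst y x = S m ->
  (forall k, k < m -> extends k) /\ x = walker (S m).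
Proof.
  revert x. induction m as [|m IH]; intros x Hc E.
  - split; [intros; lia|]. rewrite walker_1. apply dst1_adj in E.
    symmetry. eapply side_unique; eauto. apply side_self; auto.
  - assert (Hxy : x <> y) by (intros E'; rewrite E', dst_refl in E; lia).
    destruct (side_exists x y (not_eq_sym Hxy)) as [t [Ht Et]].
    rewrite (dst_sym x y), E, (dst_sym t y) in Et. injection Et as Et.
    assert (Hty : t <> y) by (intros E'; rewrite E', dst_refl in Et; lia).
    assert (Hct : side y p t) by (eapply side_step; eauto; destruct Ht; auto).
    destruct (IH t Hct (eq_sym Et)) as [Hal Ht'].
    destruct (walker_geodesic m Hal) as [A1 [A2 [A3 A4]]].
    assert (Hxa : x <> walker m) by (intros E'; rewrite E', A2 in E; lia).
    assert (Hal' : extends m).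
    { exists x. split; auto. rewrite <- Ht'. apply adj_sym. destruct Ht; auto. }
    split; [intros k Hk; destruct (Nat.eq_dec k m); [subst; auto | apply Hal; lia]|].
    destruct (extends_spec m Hal') as [B1 B2].
    destruct (classic (x = walker (S (S m)))) as [|Hne]; auto. exfalso.
    (* otherwise t would have the three neighbours walker m, walker (m+2) and x *)
    apply (Hnobranch t Hct). exists (walker m), (walker (S (S m))), x. rewrite Ht'.
    repeat split; auto; [apply adj_sym; auto | apply adj_sym; rewrite <- Ht'; destruct Ht; auto].
Qed.

Definition reaches (i : nat) : Prop := forall k, S k < i -> extends k.

Lemma walker_dst i : reaches i -> dst y (walker i) = i.
Proof.
  destruct i as [|i]; intros Hr; [apply dst_refl|].
  apply (walker_geodesic i). intros k Hk; apply Hr; lia.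
Qed.

Lemma walker_in_br i : reaches i -> br y p (walker i).
Proof.
  destruct i as [|i]; intros Hr; [left; auto|].
  right. apply (walker_geodesic i). intros k Hk; apply Hr; lia.
Qed.

Lemma walker_adj_iff i j : reaches i -> reaches j ->
  (adj (walker i) (walker j) <-> j = S i \/ i = S j).
Proof.
  intros Hi Hj. split.
  - intros Ha. destruct (adj_dst y _ _ Ha); rewrite !walker_dst in *; auto; lia.
  - intros [->| ->]; [|apply adj_sym];
      apply walker_geodesic; intros k Hk; [apply Hj | apply Hi]; lia.
Qed.

Lemma br_walker x : br y p x -> exists i, walker i = x /\ reaches i.
Proof.
  intros [->|Hc]; [exists 0; split; auto; intros k Hk; lia|].
  destruct (dst y x) as [|m] eqn:E.
  - apply dst_eq0 in E. subst. exfalso; eapply side_ne; eauto.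
  - destruct (walker_covers m x Hc E) as [Hm ->]. exists (S m). split; auto.
    intros k Hk; apply Hm; lia.
Qed.

Lemma br_ray : (forall k, extends k) -> is_ray adj (br y p).
Proof.
  intros Hall. assert (Hr : forall i, reaches i) by (intros i k _; apply Hall).
  exists walker. split; [|split].
  - intros i j E. rewrite <- (walker_dst i), <- (walker_dst j), E; auto.
  - intros x. split; [intros Hx; destruct (br_walker x Hx) as [i [Hi _]]; eauto|].
    intros [i <-]. apply walker_in_br, Hr.
  - intros i j. apply walker_adj_iff; auto.
Qed.

Lemma br_finite_path K : ~ extends K -> (forall k, k < K -> extends k) ->
  is_finite_path adj (br y p).
Proof.
  intros HK Hal.
  assert (Hr : forall i, i <= S K -> reaches i) by (intros i Hi k Hk; apply Hal; lia).
  set (l := map walker (seq 0 (S (S K)))).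
  assert (Hnth : forall i, i < S (S K) -> nth i l y = walker i).
  { intros i Hi. unfold l. rewrite <- walker_0, map_nth, seq_nth; auto. }
  assert (Hlen : length l = S (S K)) by (unfold l; rewrite length_map, length_seq; auto).
  exists l, y. split; [|split; [|split]].
  - apply NoDup_nth with (d := y). rewrite Hlen. intros i j Hi Hj E.
    rewrite !Hnth in E by auto. rewrite <- (walker_dst i), <- (walker_dst j), E; auto; apply Hr; lia.
  - unfold l; simpl; congruence.
  - intros x. unfold l. rewrite in_map_iff. split.
    + intros Hx. destruct (br_walker x Hx) as [i [<- Hi]]. exists i. split; auto.
      apply in_seq. destruct (le_lt_dec i (S K)); [lia|]. exfalso. apply HK, Hi. lia.
    + intros [i [<- Hi]]. apply in_seq in Hi. apply walker_in_br, Hr. lia.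
  - rewrite Hlen. intros i j Hi Hj. rewrite !Hnth by auto. apply walker_adj_iff; apply Hr; lia.
Qed.

Lemma br_pathlike : pathlike (br y p).
Proof.
  destruct (classic (forall k, extends k)) as [Hall|Hn]; [right; apply br_ray; auto|].
  destruct (least_witness _ (not_all_ex_not _ _ Hn)) as [K [HK Hmin]].
  left. apply (br_finite_path K HK). intros k Hk.
  destruct (classic (extends k)) as [|Hk']; auto. specialize (Hmin k Hk'). lia.
Qed.

End SideWithoutBranching.

Hypothesis Hlf : locally_finite adj.

Lemma deg_spec v : has_card eq (adj v) (deg adj v).
Proof. unfold deg. apply epsilon_spec, Hlf. Qed.

Lemma neighbour_list v : exists l, NoDup l /\ length l = deg adj v /\ forall w, adj v w <-> In w l.
Proof. apply has_card_list, deg_spec. Qed.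

Lemma branching_deg v : branching v <-> 3 <= deg adj v.
Proof.
  destruct (neighbour_list v) as [l [N [L H]]]. split.
  - intros [a [b [c [Ha [Hb [Hc [Hab [Hac Hbc]]]]]]]].
    rewrite <- L. apply (@NoDup_incl_length _ [a; b; c]).
    + repeat constructor; simpl; intuition.
    + intros z [<-|[<-|[<-|[]]]]; apply H; auto.
  - intros Hd. rewrite <- L in Hd. destruct l as [|a [|b [|c l']]]; simpl in Hd; try lia.
    exists a, b, c. inversion N as [|? ? Ha N1]; subst. inversion N1; subst. simpl in *.
    repeat split; try (apply H; simpl; auto); intuition.
Qed.

Lemma P_path_nbs v : exists Lw, NoDup Lw /\ (forall w, path_nb v w <-> In w Lw) /\ P adj v = length Lw.
Proof.
  destruct (neighbour_list v) as [l [N [_ H]]].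
  set (Lw := filter (fun w => holds (path_nb v w)) l).
  assert (HL : forall w, path_nb v w <-> In w Lw).
  { intros w. unfold Lw. rewrite filter_In, holds_true. split; [|tauto].
    intros Hp. split; auto. apply H, Hp. }
  exists Lw. split; [apply NoDup_filter; auto|]. split; auto.
  assert (Hc : has_card same_set (branch_path adj v) (length Lw)).
  { exists (map (br v) Lw), (br v v). rewrite length_map. split; auto. split; [|split].
    - intros i Hi. rewrite map_nth. apply path_nb_branch_path, HL, nth_In; auto.
    - intros B HB. destruct (branch_path_nb v B HB) as [w [Hw Hs]]. apply HL in Hw.
      destruct (In_nth Lw w v Hw) as [i [Hi E]]. exists i. split; auto. rewrite map_nth, E; auto.
    - intros i j Hi Hj Hne Hs. rewrite !map_nth in Hs. apply Hne.
      apply (proj1 (NoDup_nth Lw v) (NoDup_filter _ N)); auto.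
      apply (br_inj v); auto; apply HL, nth_In; auto. }
  assert (Hp : has_card same_set (branch_path adj v) (P adj v)).
  { unfold P. apply epsilon_spec. eauto. }
  pose proof (has_card_le same_set _ _ _ (@same_set_sym V) (@same_set_trans V) Hc Hp).
  pose proof (has_card_le same_set _ _ _ (@same_set_sym V) (@same_set_trans V) Hp Hc). lia.
Qed.

Definition fork (v : V) : Prop := 2 <= P adj v.

Lemma fork_iff v : fork v <-> exists w1 w2, path_nb v w1 /\ path_nb v w2 /\ w1 <> w2.
Proof.
  unfold fork. destruct (P_path_nbs v) as [Lw [N [H ->]]]. split.
  - intros Hl. destruct Lw as [|a [|b l']]; simpl in Hl; try lia. exists a, b.
    inversion N; subst. split; [|split]; try (apply H; simpl; auto). simpl in *; intuition.
  - intros [w1 [w2 [H1 [H2 Hne]]]]. apply (@NoDup_incl_length _ [w1; w2]).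
    + repeat constructor; simpl; intuition.
    + intros z [<-|[<-|[]]]; apply H; auto.
Qed.

Lemma br_of_side_neighbour v w u z : side v w u -> adj u z -> br v w z.
Proof. intros Hc Ha. destruct (classic (z = v)); [left | right; eapply side_step]; eauto. Qed.

Lemma path_nb_no_branching v w u : path_nb v w -> side v w u -> ~ branching u.
Proof.
  intros [_ [[l [d [_ [_ [Hl Hadj]]]]] | [g [_ [Hg Hadj]]]]] Hc
         [a [b [c [Ha [Hb [Hcc [Hab [Hac Hbc]]]]]]]].
  - (* the neighbours of u sit at positions i-1 or i+1 of the path *)
    destruct (In_nth l u d (proj1 (Hl u) (or_intror Hc))) as [i [Hi Ei]].
    assert (Hidx : forall z, adj u z -> exists j, nth j l d = z /\ (j = S i \/ i = S j)).
    { intros z Hz. destruct (In_nth l z d (proj1 (Hl z) (br_of_side_neighbour _ _ _ _ Hc Hz)))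
        as [j [Hj Ej]].
      exists j. split; auto. apply Hadj; auto. rewrite Ei, Ej; auto. }
    destruct (Hidx a Ha) as [ja [Ea Pa]]. destruct (Hidx b Hb) as [jb [Eb Pb]].
    destruct (Hidx c Hcc) as [jc [Ec Pc]].
    assert (ja = jb \/ ja = jc \/ jb = jc) as [E|[E|E]] by lia; subst; congruence.
  - destruct (proj1 (Hg u) (or_intror Hc)) as [i Ei].
    assert (Hidx : forall z, adj u z -> exists j, g j = z /\ (j = S i \/ i = S j)).
    { intros z Hz. destruct (proj1 (Hg z) (br_of_side_neighbour _ _ _ _ Hc Hz)) as [j Ej].
      exists j. split; auto. apply Hadj. rewrite Ei, Ej; auto. }
    destruct (Hidx a Ha) as [ja [Ea Pa]]. destruct (Hidx b Hb) as [jb [Eb Pb]].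
    destruct (Hidx c Hcc) as [jc [Ec Pc]].
    assert (ja = jb \/ ja = jc \/ jb = jc) as [E|[E|E]] by lia; subst; congruence.
Qed.

Lemma fork_branching v u0 : fork v -> branching u0 -> branching v.
Proof.
  intros Hg Hu0. apply fork_iff in Hg. destruct Hg as [w1 [w2 [H1 [H2 Hne]]]].
  destruct (classic (u0 = v)) as [<-|Hne0]; auto.
  destruct (side_exists v u0 Hne0) as [w [Hc _]].
  assert (A1 : w <> w1) by (intros <-; exact (path_nb_no_branching v w u0 H1 Hc Hu0)).
  assert (A2 : w <> w2) by (intros <-; exact (path_nb_no_branching v w u0 H2 Hc Hu0)).
  exists w, w1, w2. repeat split; auto; [apply Hc | apply H1 | apply H2].
Qed.

Definition hits (S : V -> Prop) : Prop :=
  forall v w1 w2, path_nb v w1 -> path_nb v w2 -> w1 <> w2 ->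
  (exists s, S s /\ side v w1 s) \/ (exists s, S s /\ side v w2 s).

(* Two neighbours of v are equidistant from everything outside their sides. *)
Lemma resolving_hits_sides S v w1 w2 : resolving_set adj S -> adj v w1 -> adj v w2 -> w1 <> w2 ->
  (exists s, S s /\ side v w1 s) \/ (exists s, S s /\ side v w2 s).
Proof.
  intros HS H1 H2 Hne. apply NNPP. intros Hn.
  destruct (HS w1 w2 Hne) as [x [Hx Hr]]. apply resolves_iff in Hr. apply Hr.
  assert (N1 : ~ side v w1 x) by (intros Hc; apply Hn; left; eauto).
  assert (N2 : ~ side v w2 x) by (intros Hc; apply Hn; right; eauto).
  rewrite (dst_sym w1 x), (dst_sym w2 x),
    (side_split v w1 w1 x (side_self _ _ H1) N1), (side_split v w2 w2 x (side_self _ _ H2) N2),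
    (dst_adj _ _ H1), (dst_adj _ _ H2).
  auto.
Qed.

Lemma resolving_hits S : resolving_set adj S -> hits S.
Proof. intros HS v w1 w2 [H1 _] [H2 _] Hne. apply resolving_hits_sides; auto. Qed.

Lemma far_neighbours y c : branching y -> y <> c ->
  exists y1 y2, adj y y1 /\ adj y y2 /\ y1 <> y2 /\ ~ side y y1 c /\ ~ side y y2 c.
Proof.
  intros [a1 [a2 [a3 [H1 [H2 [H3 [N12 [N13 N23]]]]]]]] Hyc.
  destruct (side_exists y c (not_eq_sym Hyc)) as [t [Ht _]].
  assert (Hnot : forall a, a <> t -> ~ side y a c) by (intros a Hne Hs; apply Hne; eapply side_unique; eauto).
  destruct (classic (a1 = t)) as [->|N1];
    [exists a2, a3 | destruct (classic (a2 = t)) as [->|N2]; [exists a1, a3 | exists a1, a2]];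
    repeat split; auto; apply Hnot; congruence.
Qed.

Hypothesis Hfin : finite_metric_dim adj.

(* Finite metric dimension bounds the distance from c to branching vertices:
   each of them has a side, away from c, containing a vertex of a fixed finite resolving set. *)
Lemma branching_bounded c : exists M, forall z, branching z -> z <> c -> dst c z <= M.
Proof.
  destruct Hfin as [W [m [HW Hc]]]. destruct (has_card_list W m Hc) as [lW [_ [_ HlW]]].
  exists (list_max (map (dst c) lW)).
  assert (Hm : forall s, W s -> dst c s <= list_max (map (dst c) lW)).
  { intros s Hs. pose proof (proj1 (list_max_le _ _) (le_n (list_max (map (dst c) lW)))) as HF.
    rewrite Forall_forall in HF. apply HF, in_map, HlW, Hs. }
  intros z Hz Hzc. destruct (far_neighbours z c Hz Hzc) as [y1 [y2 [A1 [A2 [N [C1 C2]]]]]].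
  destruct (resolving_hits_sides W z y1 y2 HW A1 A2 N) as [[s [Hs Hcs]]|[s [Hs Hcs]]].
  - pose proof (side_split z y1 s c Hcs C1). pose proof (Hm s Hs). lia.
  - pose proof (side_split z y2 s c Hcs C2). pose proof (Hm s Hs). lia.
Qed.

Lemma farthest_branching c a : (exists z, side c a z /\ branching z) ->
  exists y, side c a y /\ branching y /\
    forall z, side c a z -> branching z -> dst c z <= dst c y.
Proof.
  intros [z0 [Hz0 Bz0]]. destruct (branching_bounded c) as [M HM].
  destruct (least_witness (fun k => exists z, side c a z /\ branching z /\ dst c z = M - k))
    as [k [[y [Hy1 [Hy2 Hy3]]] Hmin]].
  { exists (M - dst c z0), z0. split; [|split]; auto.
    pose proof (HM z0 Bz0 (side_ne _ _ _ Hz0)). lia. }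
  exists y. split; [|split]; auto. intros z Hz Bz.
  pose proof (HM z Bz (side_ne _ _ _ Hz)). pose proof (HM y Hy2 (side_ne _ _ _ Hy1)).
  enough (k <= M - dst c z) by lia. apply Hmin. exists z. split; [|split]; auto. lia.
Qed.

Lemma side_path_or_fork c a : adj c a ->
  path_nb c a \/ exists y y1 y2, path_nb y y1 /\ path_nb y y2 /\ y1 <> y2 /\
    (forall z, side y y1 z -> side c a z) /\ (forall z, side y y2 z -> side c a z).
Proof.
  intros Hca. destruct (classic (exists z, side c a z /\ branching z)) as [Hex|Hno].
  - right. destruct (farthest_branching c a Hex) as [y [Hy1 [Hy2 Hmaxy]]].
    destruct (far_neighbours y c Hy2 (side_ne _ _ _ Hy1)) as [y1 [y2 [A1 [A2 [N [C1 C2]]]]]].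
    assert (Hsub : forall yi, ~ side y yi c -> forall z, side y yi z -> side c a z)
      by (intros yi Ci z Hz; eapply side_nest; eauto).
    (* beyond the farthest branching vertex y there is no branching vertex *)
    assert (Hpb : forall yi, adj y yi -> ~ side y yi c -> path_nb y yi).
    { intros yi Ai Ci. split; auto. apply br_pathlike; auto.
      intros z Hz Hbig. pose proof (Hmaxy z (Hsub yi Ci z Hz) Hbig).
      pose proof (side_split y yi z c Hz Ci). pose proof (side_dst y yi z Hz). lia. }
    exists y, y1, y2. split; [|split; [|split; [|split]]]; auto; apply Hsub; auto.
  - left. split; auto. apply br_pathlike; auto. intros z Hz Hb. apply Hno; eauto.
Qed.

Lemma hits_one_of_two_sides S c a b : hits S -> adj c a -> adj c b -> a <> b ->
  (exists s, S s /\ side c a s) \/ (exists s, S s /\ side c b s).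
Proof.
  intros HS Ha Hb N.
  assert (Hside : forall x, adj c x -> path_nb c x \/ exists s, S s /\ side c x s).
  { intros x Hx. destruct (side_path_or_fork c x Hx) as [|[y [y1 [y2 [P1 [P2 [Ny [S1 S2]]]]]]]]; auto.
    right. destruct (HS y y1 y2 P1 P2 Ny) as [[s [Hs Hc]]|[s [Hs Hc]]]; eauto. }
  destruct (Hside a Ha) as [Pa|]; auto. destruct (Hside b Hb) as [Pb|]; auto.
Qed.

Hypothesis Hmax : max_degree_ge3 adj.

Lemma branching_exists : exists u, branching u.
Proof. destruct Hmax as [u Hu]. exists u. apply branching_deg, Hu. Qed.

Lemma hits_nonempty S : hits S -> exists s, S s.
Proof.
  intros HS. destruct branching_exists as [u0 [a1 [a2 [_ [H1 [H2 [_ [N12 _]]]]]]]].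
  destruct (hits_one_of_two_sides S u0 a1 a2 HS H1 H2 N12) as [[s [Hs _]]|[s [Hs _]]]; eauto.
Qed.

Lemma equidistant_resolved c a u v s : side c a u -> ~ side c a v -> side c a s ->
  dst c u = dst c v -> dst u s <> dst v s.
Proof.
  intros Cu Nv Cs E.
  pose proof (side_split c a s v Cs Nv). pose proof (dst_triangle s a u).
  pose proof (side_dst _ _ _ Cs). pose proof (side_dst _ _ _ Cu).
  rewrite (dst_sym v c) in *. rewrite (dst_sym s u), (dst_sym s a) in *. lia.
Qed.

(* A hitting set is resolving: for an unresolved pair u <> v take a vertex c
   equidistant from both with that distance minimal; then u and v lie on
   different sides of c and S meets one of these sides. *)
Lemma hits_resolving S : hits S -> resolving_set adj S.
Proof.
  intros HS u v Huv. apply NNPP. intros Hn.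
  assert (Heq : forall s, S s -> dst u s = dst v s).
  { intros s Hs. apply NNPP. intros Hne. apply Hn. exists s. split; auto. apply resolves_iff; auto. }
  destruct (hits_nonempty S HS) as [s0 Hs0].
  destruct (least_witness (fun k => exists c, dst c u = dst c v /\ dst c u = k))
    as [k [[c [Ec <-]] Hmin]].
  { exists (dst s0 u), s0. rewrite !(dst_sym s0). auto. }
  assert (Hcu : u <> c) by (intros ->; rewrite dst_refl in Ec; apply Huv, dst_eq0; auto).
  assert (Hcv : v <> c) by (intros ->; rewrite dst_refl in Ec; apply Huv, eq_sym, dst_eq0; auto).
  destruct (side_exists c u Hcu) as [a [Ca Ea]]. destruct (side_exists c v Hcv) as [b [Cb Eb]].
  assert (Nab : a <> b).
  { intros <-. assert (dst c u <= dst a u) by (apply Hmin; exists a; split; auto; lia). lia. }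
  assert (Hav : ~ side c a v) by (intros C; apply Nab; eapply side_unique; eauto).
  assert (Hbu : ~ side c b u) by (intros C; apply Nab; eapply side_unique; eauto).
  destruct (hits_one_of_two_sides S c a b HS (proj1 Ca) (proj1 Cb) Nab) as [[s [Hs Cs]]|[s [Hs Cs]]].
  - exact (equidistant_resolved c a u v s Ca Hav Cs Ec (Heq s Hs)).
  - exact (equidistant_resolved c b v u s Cb Hbu Cs (eq_sym Ec) (eq_sym (Heq s Hs))).
Qed.

Lemma resolving_iff_hits S : resolving_set adj S <-> hits S.
Proof. split; [apply resolving_hits | apply hits_resolving]. Qed.

Lemma fork_is_branching v : fork v -> branching v.
Proof. intros Hv. destruct branching_exists as [u Hu]. exact (fork_branching v u Hv Hu). Qed.

(* Every fork has degree at least 3, so the summand of the theorem is P_T(v) - 1. *)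
Lemma summand_eq v : (if 3 <=? deg adj v then P adj v - 1 else 0) = P adj v - 1.
Proof.
  destruct (3 <=? deg adj v) eqn:E; auto. apply Nat.leb_gt in E.
  destruct (le_lt_dec 2 (P adj v)) as [Hf|]; [|lia].
  apply fork_is_branching, branching_deg in Hf. lia.
Qed.

(* Path-sides at distinct forks are disjoint: a fork never lies on a path-side. *)
Lemma fork_sides_disjoint v w s v' w' :
  path_nb v w -> fork v -> side v w s -> path_nb v' w' -> fork v' -> side v' w' s ->
  v = v' /\ w = w'.
Proof.
  intros P1 G1 C1 P2 G2 C2. destruct (classic (v = v')) as [<-|Hne].
  - split; auto. eapply side_unique; eauto.
  - exfalso.
    assert (N1 : ~ side v w v') by (intros C; apply (path_nb_no_branching v w v' P1 C), fork_is_branching; auto).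
    assert (N2 : ~ side v' w' v) by (intros C; apply (path_nb_no_branching v' w' v P2 C), fork_is_branching; auto).
    pose proof (side_split v w s v' C1 N1). pose proof (side_split v' w' s v C2 N2).
    rewrite (dst_sym v v') in *. apply Hne, eq_sym, dst_eq0. lia.
Qed.

(* There are finitely many forks: each one owns a vertex of a finite resolving set. *)
Lemma forks_finite : exists lv, NoDup lv /\ forall v, In v lv <-> fork v.
Proof.
  destruct Hfin as [W [m [HW Hc]]]. destruct (has_card_list W m Hc) as [lW [_ [_ HlW]]].
  set (owns := fun s v => exists w, path_nb v w /\ fork v /\ side v w s).
  set (owner := fun s => epsilon (inhabits s) (owns s)).
  assert (Howner : forall s v, owns s v -> owner s = v).
  { intros s v Ho. destruct (epsilon_spec (inhabits s) (owns s) (ex_intro _ v Ho)) as [w' [P' [G' C']]].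
    destruct Ho as [w [Pw [Gw Cw]]]. exact (proj1 (fork_sides_disjoint _ _ _ _ _ P' G' C' Pw Gw Cw)). }
  exists (nodup (fun x y => excluded_middle_informative (x = y))
            (map owner (filter (fun s => holds (exists v, owns s v)) lW))).
  split; [apply NoDup_nodup|]. intros v. rewrite nodup_In, in_map_iff. split.
  - intros [s [<- Hs]]. apply filter_In in Hs. destruct Hs as [_ Hs]. apply (proj1 (holds_true _)) in Hs.
    destruct (epsilon_spec (inhabits s) (owns s) Hs) as [w [_ [G _]]]. exact G.
  - intros G. destruct (proj1 (fork_iff v) G) as [w1 [w2 [P1 [P2 N]]]].
    destruct (resolving_hits W HW v w1 w2 P1 P2 N) as [[s [Hs Cs]]|[s [Hs Cs]]];
      assert (Ho : owns s v) by (eexists; eauto);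
      exists s; (split; [apply Howner, Ho | apply filter_In; split; [apply HlW, Hs | apply holds_true; eauto]]).
Qed.

Definition path_nbs (v : V) : list V := epsilon (inhabits [])
  (fun Lw => NoDup Lw /\ (forall w, path_nb v w <-> In w Lw) /\ P adj v = length Lw).

Lemma path_nbs_spec v :
  NoDup (path_nbs v) /\ (forall w, path_nb v w <-> In w (path_nbs v)) /\ P adj v = length (path_nbs v).
Proof. unfold path_nbs. apply epsilon_spec, P_path_nbs. Qed.

Definition selects (v : V) (sv : list V) : Prop :=
  length sv = P adj v - 1 /\
  exists (Bs : list (V -> Prop)) (dB : V -> Prop) (dx : V),
    length Bs = P adj v - 1 /\
    (forall i, i < length Bs ->
       branch_path adj v (nth i Bs dB) /\ nth i sv dx <> v /\ nth i Bs dB (nth i sv dx)) /\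
    (forall i j, i < length Bs -> j < length Bs -> i <> j ->
       ~ same_set (nth i Bs dB) (nth j Bs dB)).

Lemma selects_of_sides v us sv : NoDup us -> length us = P adj v - 1 -> length sv = P adj v - 1 ->
  (forall i, i < length us -> path_nb v (nth i us v) /\ side v (nth i us v) (nth i sv v)) ->
  selects v sv.
Proof.
  intros Nus Lus Lsv Hus. split; auto.
  exists (map (br v) us), (br v v), v. rewrite length_map. split; auto. split.
  - intros i Hi. rewrite map_nth. destruct (Hus i Hi) as [Hp Hs].
    split; [apply path_nb_branch_path; auto|]. split; [apply (side_ne _ _ _ Hs) | right; auto].
  - intros i j Hi Hj Hne Hss. rewrite !map_nth in Hss. apply Hne.
    apply (proj1 (NoDup_nth _ v) Nus); auto. apply (br_inj v); auto; apply Hus; auto.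
Qed.

Lemma sides_of_selects v sv : selects v sv ->
  exists us, NoDup us /\ length us = P adj v - 1 /\
    forall i, i < length us -> path_nb v (nth i us v) /\ side v (nth i us v) (nth i sv v).
Proof.
  intros [Ls [Bs [dB [dx [LB [Hi Hd]]]]]].
  set (nb := fun i => epsilon (inhabits v) (fun w => path_nb v w /\ same_set (nth i Bs dB) (br v w))).
  assert (Hnb : forall i, i < length Bs -> path_nb v (nb i) /\ same_set (nth i Bs dB) (br v (nb i))).
  { intros i H. apply (epsilon_spec (inhabits v) (fun w => path_nb v w /\ same_set (nth i Bs dB) (br v w))).
    apply branch_path_nb, Hi; auto. }
  assert (Hinj : forall i j, i < length Bs -> j < length Bs -> nb i = nb j -> i = j).
  { intros i j H1 H2 E. destruct (Nat.eq_dec i j) as [|Hne]; auto. exfalso. apply (Hd i j H1 H2 Hne).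
    destruct (Hnb i H1) as [_ S1]. destruct (Hnb j H2) as [_ S2]. rewrite E in S1.
    eapply same_set_trans; eauto. apply same_set_sym; auto. }
  exists (map nb (seq 0 (length Bs))). rewrite length_map, length_seq. split; [|split; auto].
  - apply NoDup_map_NoDup_ForallPairs; [|apply seq_NoDup].
    intros a b Ha Hb E. apply in_seq in Ha; apply in_seq in Hb. apply Hinj; auto; lia.
  - intros i H. rewrite (nth_indep _ v (nb 0)) by (rewrite length_map, length_seq; auto).
    rewrite map_nth, seq_nth by auto. simpl. destruct (Hnb i H) as [Hp Hs]. split; auto.
    destruct (Hi i H) as [_ [Hne Hin]]. rewrite (nth_indep _ v dx) by lia.
    apply Hs in Hin. destruct Hin; [congruence | auto].
Qed.

Lemma selects_hits v sv : selects v sv ->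
  NoDup sv /\ (forall x, In x sv -> exists w, path_nb v w /\ side v w x) /\
  (forall w1 w2, path_nb v w1 -> path_nb v w2 -> w1 <> w2 ->
     (exists x, In x sv /\ side v w1 x) \/ (exists x, In x sv /\ side v w2 x)).
Proof.
  intros Hsel. pose proof (proj1 Hsel) as Ls.
  destruct (sides_of_selects v sv Hsel) as [us [Nus [Lus Hus]]].
  split; [|split].
  - apply (NoDup_nth sv v). intros i j H1 H2 E. rewrite Ls, <- Lus in H1, H2.
    apply (proj1 (NoDup_nth us v) Nus); auto.
    apply (side_unique v _ _ (nth i sv v)); [apply Hus; auto | rewrite E; apply Hus; auto].
  - intros x Hx. destruct (In_nth sv x v Hx) as [i [H1 <-]]. rewrite Ls, <- Lus in H1.
    exists (nth i us v). apply Hus; auto.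
  - (* otherwise w1, w2 and the P_T(v) - 1 entries of us are distinct path-neighbours *)
    intros w1 w2 P1 P2 N. apply NNPP. intros Hn.
    assert (Hw : forall w, In w us -> path_nb v w /\ w <> w1 /\ w <> w2).
    { intros w Hw. destruct (In_nth us w v Hw) as [i [Hi <-]]. destruct (Hus i Hi) as [Hp Hs].
      assert (In (nth i sv v) sv) by (apply nth_In; lia).
      split; auto. split; intros E; apply Hn; [left | right]; exists (nth i sv v); rewrite <- E; auto. }
    destruct (path_nbs_spec v) as [_ [HL EL]].
    assert (Hle : length (w1 :: w2 :: us) <= length (path_nbs v)).
    { apply NoDup_incl_length.
      - constructor; [intros [E|Hin]; [auto | apply Hw in Hin; tauto]|].
        constructor; [intros Hin; apply Hw in Hin; tauto | auto].
      - intros z [<-|[<-|Hz]]; apply HL; auto. apply Hw; auto. }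
    simpl in Hle. lia.
Qed.

Section Counting.
Variable lv : list V.
Hypothesis Hlv : NoDup lv.
Hypothesis Hlv_forks : forall v, In v lv <-> fork v.

Definition forks_sum : nat := sumf (fun v => P adj v - 1) lv.

Section HittingSet.
Variables (S : V -> Prop) (lS : list V).
Hypothesis HS : forall x, S x <-> In x lS.
Hypothesis HitS : hits S.

Definition hit_nbs (v : V) : list V :=
  filter (fun w => holds (exists s, S s /\ side v w s)) (path_nbs v).
Definition witness (v w : V) : V := epsilon (inhabits v) (fun s => S s /\ side v w s).
Definition witnesses (v : V) : list V := map (witness v) (hit_nbs v).

Lemma hit_nbs_spec v w : In w (hit_nbs v) <-> path_nb v w /\ exists s, S s /\ side v w s.
Proof.
  unfold hit_nbs. rewrite filter_In, holds_true. destruct (path_nbs_spec v) as [_ [H _]].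
  rewrite <- H. tauto.
Qed.

Lemma hit_nbs_NoDup v : NoDup (hit_nbs v).
Proof. apply NoDup_filter, path_nbs_spec. Qed.

Lemma witness_spec v w : In w (hit_nbs v) -> S (witness v w) /\ side v w (witness v w).
Proof. intros H. apply hit_nbs_spec in H. unfold witness. apply epsilon_spec, H. Qed.

Lemma hit_nbs_length v : P adj v - 1 <= length (hit_nbs v).
Proof.
  destruct (path_nbs_spec v) as [N [H ->]]. apply filter_length_ge; auto.
  intros w1 w2 H1 H2 Hne. apply HitS; [apply H, H1 | apply H, H2 | exact Hne].
Qed.

Lemma witness_nth v i : i < length (hit_nbs v) ->
  nth i (witnesses v) v = witness v (nth i (hit_nbs v) v).
Proof.
  intros Hi. unfold witnesses. rewrite (nth_indep _ v (witness v v)) by (rewrite length_map; auto).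
  apply map_nth.
Qed.

Lemma witnesses_in v x : In x (witnesses v) -> exists w, path_nb v w /\ side v w x /\ S x.
Proof.
  unfold witnesses. rewrite in_map_iff. intros [w [<- Hw]]. destruct (witness_spec v w Hw).
  exists w. split; auto. apply hit_nbs_spec in Hw. apply Hw.
Qed.

Definition all_witnesses : list V := concat (map witnesses lv).

Lemma all_witnesses_NoDup : NoDup all_witnesses.
Proof.
  apply NoDup_concat_map; auto.
  - intros v _. unfold witnesses. apply NoDup_map_NoDup_ForallPairs; [|apply hit_nbs_NoDup].
    intros w1 w2 H1 H2 E. destruct (witness_spec v w1 H1) as [_ C1].
    destruct (witness_spec v w2 H2) as [_ C2]. rewrite E in C1. eapply side_unique; eauto.
  - intros v v' x Hv Hv' Hne H1 H2. apply witnesses_in in H1. apply witnesses_in in H2.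
    destruct H1 as [w [P1 [C1 _]]]. destruct H2 as [w' [P2 [C2 _]]].
    apply Hne. eapply (fork_sides_disjoint v w x v' w'); eauto; apply Hlv_forks; auto.
Qed.

Lemma all_witnesses_incl : incl all_witnesses lS.
Proof.
  intros x Hx. apply in_concat_map in Hx. destruct Hx as [v [_ Hx]]. apply witnesses_in in Hx.
  apply HS. destruct Hx as [? [? [? ?]]]; auto.
Qed.

Lemma forks_sum_le_witnesses : forks_sum <= length all_witnesses.
Proof.
  unfold all_witnesses. rewrite length_concat_map. apply sumf_le.
  intros v _. unfold witnesses. rewrite length_map. apply hit_nbs_length.
Qed.

Lemma hits_card_ge : forks_sum <= length lS.
Proof.
  eapply Nat.le_trans; [apply forks_sum_le_witnesses|].
  apply NoDup_incl_length; [apply all_witnesses_NoDup | apply all_witnesses_incl].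
Qed.

Lemma hits_card_tight : length lS <= forks_sum ->
  (forall v, In v lv -> length (hit_nbs v) = P adj v - 1) /\ (forall x, S x <-> In x all_witnesses).
Proof.
  intros Hle. pose proof forks_sum_le_witnesses as Hge.
  assert (HL : length all_witnesses <= length lS)
    by (apply NoDup_incl_length; [apply all_witnesses_NoDup | apply all_witnesses_incl]).
  assert (HE : length all_witnesses = sumf (fun v => length (hit_nbs v)) lv).
  { unfold all_witnesses. rewrite length_concat_map. apply sumf_ext. intros v _. apply length_map. }
  split.
  - intros v Hv. symmetry.
    apply (sumf_le_eq (fun v => P adj v - 1) (fun v => length (hit_nbs v)) lv); auto.
    + intros u _. apply hit_nbs_length.
    + unfold forks_sum in Hle. lia.
  - intros x. rewrite HS. split; [|apply all_witnesses_incl].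
    apply (NoDup_length_incl all_witnesses_NoDup); [lia | apply all_witnesses_incl].
Qed.

Lemma min_hitting_set_selection : length lS <= forks_sum -> obtained_by_selection adj S.
Proof.
  intros Hle. destruct (hits_card_tight Hle) as [Hlen HSw].
  exists (fun v => if holds (fork v) then witnesses v else []). split; [|split].
  - intros v G. rewrite (proj2 (holds_true (fork v)) G).
    assert (Hl : length (hit_nbs v) = P adj v - 1) by (apply Hlen, Hlv_forks, G).
    apply (selects_of_sides v (hit_nbs v)); auto.
    + apply hit_nbs_NoDup.
    + unfold witnesses. rewrite length_map; auto.
    + intros i Hi. rewrite witness_nth by auto.
      assert (Hin : In (nth i (hit_nbs v) v) (hit_nbs v)) by (apply nth_In; auto).
      split; [apply hit_nbs_spec, Hin | apply witness_spec, Hin].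
  - intros v Hv. destruct (holds (fork v)) eqn:E; auto.
    apply (proj1 (holds_true _)) in E. unfold fork in E. lia.
  - intros x. rewrite HSw. unfold all_witnesses. rewrite in_concat_map. split.
    + intros [v [Hv Hx]]. exists v. rewrite (proj2 (holds_true (fork v)) (proj1 (Hlv_forks v) Hv)). auto.
    + intros [v Hx]. destruct (holds (fork v)) eqn:E; [|destruct Hx].
      exists v. split; auto. apply Hlv_forks, holds_true, E.
Qed.

End HittingSet.

Lemma selection_hits_card (d0 : V) S : obtained_by_selection adj S ->
  hits S /\ has_card eq S forks_sum.
Proof.
  intros [sel [H1 [H2 H3]]].
  assert (Hfork : forall v x, In x (sel v) -> fork v).
  { intros v x Hx. unfold fork. destruct (le_lt_dec 2 (P adj v)); auto. rewrite H2 in Hx; [destruct Hx | auto]. }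
  split.
  - intros v w1 w2 P1 P2 N.
    destruct (selects_hits v (sel v) (H1 v (proj2 (fork_iff v) (ex_intro _ w1 (ex_intro _ w2 (conj P1 (conj P2 N)))))))
      as [_ [_ C]].
    destruct (C w1 w2 P1 P2 N) as [[x [Hx Cx]]|[x [Hx Cx]]]; [left | right];
      exists x; split; auto; apply H3; eauto.
  - replace forks_sum with (length (concat (map sel lv))).
    + apply list_has_card; [exact d0 | |].
      * apply NoDup_concat_map; auto; [intros v Hv; apply (selects_hits v), H1, Hlv_forks; auto|].
        intros v v' x Hin Hin' Hne Hx Hx'.
        destruct (selects_hits v (sel v) (H1 v (Hfork v x Hx))) as [_ [B _]].
        destruct (selects_hits v' (sel v') (H1 v' (Hfork v' x Hx'))) as [_ [B' _]].
        destruct (B x Hx) as [w [Pw Cw]]. destruct (B' x Hx') as [w' [Pw' Cw']].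
        apply Hne. eapply (fork_sides_disjoint v w x v' w'); eauto.
      * intros x. rewrite in_concat_map, H3. split.
        -- intros [v Hx]. exists v. split; auto. apply Hlv_forks. eauto.
        -- intros [v [_ Hx]]; eauto.
    + rewrite length_concat_map. apply sumf_ext. intros v Hin. apply H1, Hlv_forks; auto.
Qed.

(* The canonical selection: at each fork, the first P_T(v) - 1 path-neighbours themselves. *)
Lemma selection_exists : exists S, obtained_by_selection adj S.
Proof.
  set (sel := fun v => if holds (fork v) then firstn (P adj v - 1) (path_nbs v) else []).
  exists (fun x => exists v, In x (sel v)), sel. split; [|split; [|tauto]].
  - intros v G. unfold sel. rewrite (proj2 (holds_true (fork v)) G).
    destruct (path_nbs_spec v) as [N [HL EL]].
    destruct (firstn_NoDup_incl (path_nbs v) (P adj v - 1) N) as [Nf If].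
    assert (Hlen : length (firstn (P adj v - 1) (path_nbs v)) = P adj v - 1)
      by (rewrite length_firstn; lia).
    apply (selects_of_sides v (firstn (P adj v - 1) (path_nbs v))); auto.
    intros i Hi. assert (Hp : path_nb v (nth i (firstn (P adj v - 1) (path_nbs v)) v))
      by (apply HL, If, nth_In; auto).
    split; auto. apply side_self, Hp.
  - intros v Hv. unfold sel. destruct (holds (fork v)) eqn:E; auto.
    apply (proj1 (holds_true _)) in E. unfold fork in E. lia.
Qed.

Lemma resolving_card_ge S m : resolving_set adj S -> has_card eq S m -> forks_sum <= m.
Proof.
  intros HS Hc. destruct (has_card_list S m Hc) as [lS [_ [<- HSl]]].
  exact (hits_card_ge S lS HSl (proj1 (resolving_iff_hits S) HS)).
Qed.

Lemma metric_dim_forks_sum : metric_dim_is adj forks_sum.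
Proof.
  destruct branching_exists as [d0 _]. destruct selection_exists as [S0 HS0].
  destruct (selection_hits_card d0 S0 HS0) as [Hit0 Hc0].
  split; [exists S0; split; [apply resolving_iff_hits|]; auto | apply resolving_card_ge].
Qed.

Lemma metric_dim_unique n : metric_dim_is adj n -> n = forks_sum.
Proof.
  intros [[S [HS Hc]] Hle]. pose proof (resolving_card_ge S n HS Hc).
  destruct metric_dim_forks_sum as [[S0 [HS0 Hc0]] _]. pose proof (Hle S0 _ HS0 Hc0). lia.
Qed.

Lemma metric_basis_iff_selection S : metric_basis adj S <-> obtained_by_selection adj S.
Proof.
  split.
  - intros [Hres [n [Hcard Hdim]]]. apply metric_dim_unique in Hdim. subst n.
    destruct (has_card_list S _ Hcard) as [lS [_ [Hl HSl]]].
    apply (min_hitting_set_selection S lS HSl (proj1 (resolving_iff_hits S) Hres)). lia.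
  - intros Hsel. destruct branching_exists as [d0 _].
    destruct (selection_hits_card d0 S Hsel) as [HitS HcS].
    split; [apply resolving_iff_hits; auto | exists forks_sum; split; auto; apply metric_dim_forks_sum].
Qed.

Lemma fsum_forks_sum : fsum_is (fun v => if 3 <=? deg adj v then P adj v - 1 else 0) forks_sum.
Proof.
  exists lv. split; auto. split.
  - intros v Hv. rewrite summand_eq in Hv. apply Hlv_forks. unfold fork. lia.
  - apply sumf_ext. intros v _. symmetry. apply summand_eq.
Qed.

End Counting.

Lemma metric_dimension_of_tree :
  (exists n, metric_dim_is adj n /\
     fsum_is (fun v => if 3 <=? deg adj v then P adj v - 1 else 0) n) /\
  (forall S : V -> Prop, metric_basis adj S <-> obtained_by_selection adj S).
Proof.
  destruct forks_finite as [lv [Hlv Hforks]]. split.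
  - exists (forks_sum lv). split; [apply metric_dim_forks_sum | apply fsum_forks_sum]; auto.
  - intros S. apply (metric_basis_iff_selection lv Hlv Hforks).
Qed.

End Tree.

Theorem theorem4 (V : Type) (adj : V -> V -> Prop) :
  is_tree adj -> @infinite_vertices V -> locally_finite adj ->
  max_degree_ge3 adj -> finite_metric_dim adj ->
  (exists n, metric_dim_is adj n /\
     fsum_is (fun v => if 3 <=? deg adj v then P adj v - 1 else 0) n) /\
  (forall S : V -> Prop, metric_basis adj S <-> obtained_by_selection adj S).
Proof.
  intros Htree _ Hlf Hmax Hfin.
  exact (metric_dimension_of_tree adj Htree (proj1 (proj2 Htree)) Hlf Hfin Hmax).
Qed.
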